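(* Let $A$ be a ring, $\delta=(\delta_1,\ldots,\delta_n)$ an $n$-tuple of pairwise commuting derivations of $A$, $d_i\in\mathbb{N}\cup\{\infty\}$, $I=\{\alpha\in\mathbb{N}^n\mid\alpha_i\le d_i\ \forall i\}$, and let $\{x^{[\alpha]}\mid\alpha\in I\}$ be a $\delta$-descent. Then for each $\alpha\in I$, $N_\alpha=\bigoplus_{0\le\beta\le\alpha}A^\delta x^{[\beta]}=\bigoplus_{0\le\beta\le\alpha}x^{[\beta]}A^\delta$.
   Context: $A^\delta=\bigcap_i\ker\delta_i$; $N_\alpha=\bigcap_{i=1}^n\ker\delta_i^{\alpha_i+1}$; $\beta\le\alpha$ means $\beta_i\le\alpha_i$ for all $i$; $\delta^\alpha=\delta_1^{\alpha_1}\cdots\delta_n^{\alpha_n}$. A family $\{x^{[\alpha]}\mid\alpha\in I\}$ is a $\delta$-descent if $x^{[0]}=1$ and $\delta^\alpha(x^{[\beta]})=x^{[\beta-\alpha]}$ for all $\alpha\in\mathbb{N}^n$, $\beta\in I$, where $x^{[\gamma]}:=0$ for $\gamma\in\mathbb{Z}^n\setminus\mathbb{N}^n$. *)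

From mathcomp Require Import all_boot all_order all_algebra.
Set Implicit Arguments. Unset Strict Implicit. Unset Printing Implicit Defensive.
Import GRing.Theory.
Local Open Scope ring_scope.

Definition mindex (n : nat) := {ffun 'I_n -> nat}.

Definition mzero n : mindex n := [ffun => 0%N].
Definition mle n (b a : mindex n) : bool := [forall i, (b i <= a i)%N].
Definition msub n (b a : mindex n) : mindex n := [ffun i => (b i - a i)%N].

(* I = {alpha | alpha_i <= d_i}, with d_i in N u {oo}; None encodes oo *)
Definition inI n (d : 'I_n -> option nat) (a : mindex n) : bool :=
  [forall i, if d i is Some k then (a i <= k)%N else true].

(* the finite list of all beta with 0 <= beta <= alpha (duplicate-free) *)
Definition box n (a : mindex n) : seq (mindex n) :=
  [seq b <- [seq [ffun i => nat_of_ord (f i)] | f : {ffun 'I_n -> 'I_(\max_i a i).+1}]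
   | mle b a].

Section Der.
Variable A : pzRingType.

Definition is_derivation (D : A -> A) : Prop :=
  (forall a b, D (a + b) = D a + D b) /\ (forall a b, D (a * b) = D a * b + a * D b).

Variable n : nat.
Variable delta : 'I_n -> A -> A.

Definition dpow (a : mindex n) (y : A) : A :=
  foldr (fun i z => iter (a i) (delta i) z) y (enum 'I_n).

Definition constants (y : A) : Prop := forall i, delta i y = 0.

(* N_alpha = intersection of ker delta_i^(alpha_i + 1) *)
Definition Nset (a : mindex n) (y : A) : Prop :=
  forall i, iter (a i).+1 (delta i) y = 0.

(* delta-descent indexed by I; x^[gamma] := 0 for gamma outside N^n *)
Definition descent (d : 'I_n -> option nat) (x : mindex n -> A) : Prop :=
  x (mzero n) = 1 /\
  forall (a b : mindex n), inI d b ->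
    dpow a (x b) = if mle a b then x (msub b a) else 0.
End Der.

Definition is_dsum (A : pzRingType) (I : eqType) (S : A -> Prop) (s : seq I)
    (M : I -> A -> Prop) : Prop :=
  (forall y, S y <-> exists z : I -> A,
      (forall b, b \in s -> M b (z b)) /\ y = \sum_(b <- s) z b) /\
  (forall z : I -> A, (forall b, b \in s -> M b (z b)) ->
      \sum_(b <- s) z b = 0 -> forall b, b \in s -> z b = 0).

(* An element y of N_alpha is decomposed from the top degree down. If all derivatives
   delta^g y of order > k vanish, those of order k are constants; since
   delta^g x^[b] = [g = b] whenever |g| >= |b|, subtracting the sum of the
   delta^b(y) x^[b] over |b| = k kills every derivative of order >= k. Directness is
   the same computation: applying delta^b to a vanishing combination whose terms of
   degree > |b| are already known to vanish isolates the coefficient of x^[b].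
   Right coefficients are left coefficients in the converse ring. *)

From mathcomp Require Import all_boot all_order all_algebra.
Set Implicit Arguments. Unset Strict Implicit. Unset Printing Implicit Defensive.
Import GRing.Theory.

Section MultiIndices.
Variable n : nat.
Implicit Types a b g h : mindex n.

Definition mdeg b : nat := \sum_i b i.
Definition madd g h : mindex n := [ffun i => g i + h i].
Definition munit (i : 'I_n) (m : nat) : mindex n := [ffun j => if j == i then m else 0].

Lemma mleP g b : reflect (forall i, g i <= b i) (mle g b).
Proof. exact: forallP. Qed.

Lemma mlexx b : mle b b.
Proof. by apply/mleP. Qed.

Lemma msubxx b : msub b b = mzero n.
Proof. by apply/ffunP => i; rewrite !ffunE subnn. Qed.

Lemma mdegD g h : mdeg (madd g h) = mdeg g + mdeg h.
Proof. by rewrite /mdeg -big_split; apply: eq_bigr => i _; rewrite ffunE. Qed.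

Lemma mdeg_munit i m : mdeg (munit i m) = m.
Proof.
rewrite /mdeg (bigD1 i) //= ffunE eqxx big1 ?addn0 // => j /negbTE ji.
by rewrite ffunE ji.
Qed.

Lemma leq_mdeg g b : mle g b -> mdeg g <= mdeg b.
Proof. by move/mleP => gb; apply: leq_sum => i _. Qed.

Lemma mle_mdeg_eq g b : mle g b -> mdeg b <= mdeg g -> g = b.
Proof.
move=> /mleP gb deg_bg; apply/ffunP => i; apply/eqP; rewrite eqn_leq gb /=.
have : \sum_j (b j - g j) == 0.
  move: deg_bg; have -> : mdeg b = mdeg g + \sum_j (b j - g j).
    rewrite /mdeg -big_split; apply: eq_bigr => j _; exact/esym/subnKC.
  by rewrite -[X in _ <= X]addn0 leq_add2l leqn0.
by rewrite sum_nat_eq0 => /forallP /(_ i); rewrite subn_eq0.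
Qed.

Lemma inI_mle (d : 'I_n -> option nat) g b : mle g b -> inI d b -> inI d g.
Proof.
move=> /mleP gb /forallP db; apply/forallP => i; have := db i.
by case: (d i) => // k; apply: leq_trans.
Qed.

Lemma mem_box a b : (b \in box a) = mle b a.
Proof.
rewrite mem_filter; case ba: (mle b a) => //=; apply/mapP.
exists [ffun i => inord (b i) : 'I_(\max_i a i).+1]; first by rewrite mem_enum.
apply/ffunP => i; rewrite !ffunE inordK // ltnS.
by apply: leq_trans (leq_bigmax i); move/mleP: ba.
Qed.

Lemma uniq_box a : uniq (box a).
Proof.
rewrite filter_uniq // map_inj_uniq ?enum_uniq // => f g /ffunP fg.
by apply/ffunP => i; apply: val_inj; have := fg i; rewrite !ffunE.
Qed.

End MultiIndices.

Local Open Scope ring_scope.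

Lemma sum_seq_pred1 (I : eqType) (V : nmodType) (r : seq I) (i : I) (F : I -> V) :
  uniq r -> \sum_(j <- r) (if j == i then F j else 0) = if i \in r then F i else 0.
Proof.
move=> r_uniq; rewrite -big_mkcond; case: ifP => [ir|ir].
  by rewrite -big_filter [filter _ _]filter_pred1_uniq // big_seq1.
by rewrite big1_seq // => j /andP [/eqP -> ]; rewrite ir.
Qed.

Section AdditiveMaps.
Variables (A : zmodType) (f : A -> A).
Hypothesis fD : {morph f : u v / u + v}.

Lemma morph_add0 : f 0 = 0.
Proof. by apply: (@addrI _ (f 0)); rewrite -fD !addr0. Qed.

Lemma morph_addB u v : f (u - v) = f u - f v.
Proof. by apply: (@addIr _ (f v)); rewrite -fD !subrK. Qed.

Lemma morph_add_sum (I : Type) (r : seq I) (F : I -> A) :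
  f (\sum_(i <- r) F i) = \sum_(i <- r) f (F i).
Proof. exact: (big_morph f fD morph_add0). Qed.

Lemma morph_add_iter m : {morph iter m f : u v / u + v}.
Proof. by elim: m => [//|m IHm] u v /=; rewrite IHm fD. Qed.

End AdditiveMaps.

Section CommutingDerivations.
Variables (A : pzRingType) (n : nat) (delta : 'I_n -> A -> A).
Hypothesis delta_der : forall i, is_derivation (delta i).
Hypothesis delta_comm : forall i j y, delta i (delta j y) = delta j (delta i y).
Implicit Types (a b g h : mindex n) (y z c : A).

Lemma deltaD i : {morph delta i : u v / u + v}.
Proof. by case: (delta_der i). Qed.

Lemma constants0 : constants delta 0.
Proof. by move=> i; rewrite (morph_add0 (deltaD i)). Qed.

Lemma iter_delta_comm i j m k y :
  iter m (delta i) (iter k (delta j) y) = iter k (delta j) (iter m (delta i) y).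
Proof.
have comm1 z : iter m (delta i) (delta j z) = delta j (iter m (delta i) z).
  by elim: m => [//|m IHm] /=; rewrite IHm delta_comm.
by elim: k => [//|k IHk] /=; rewrite comm1 IHk.
Qed.

Lemma iter_foldr_comm g i m y (s : seq 'I_n) :
  iter m (delta i) (foldr (fun j z => iter (g j) (delta j) z) y s)
  = foldr (fun j z => iter (g j) (delta j) z) (iter m (delta i) y) s.
Proof. by elim: s => [//|j s IHs] /=; rewrite iter_delta_comm IHs. Qed.

Lemma dpowD g : {morph dpow delta g : u v / u + v}.
Proof.
rewrite /dpow => u v; elim: (enum 'I_n) => [//|j s IHs] /=.
by rewrite IHs (morph_add_iter (deltaD j)).
Qed.

Lemma dpow0 y : dpow delta (mzero n) y = y.
Proof.
by rewrite /dpow; elim: (enum 'I_n) => [//|j s IHs] /=; rewrite ffunE.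
Qed.

Lemma dpow_madd g h y : dpow delta (madd g h) y = dpow delta g (dpow delta h y).
Proof.
rewrite /dpow; elim: (enum 'I_n) => [//|j s IHs] /=.
by rewrite ffunE iterD IHs iter_foldr_comm.
Qed.

Lemma dpow_munit i m y : dpow delta (munit i m) y = iter m (delta i) y.
Proof.
rewrite /dpow.
have -> s : foldr (fun j z => iter (munit i m j) (delta j) z) y s
            = iter (m * count_mem i s) (delta i) y.
  elim: s => [|j s IHs] /=; first by rewrite muln0.
  rewrite IHs ffunE; case: eqP => [->|_]; last by rewrite add0n.
  by rewrite add1n mulnS iterD.
by rewrite count_uniq_mem ?enum_uniq // mem_enum muln1.
Qed.

Lemma dpow_mulC c g z : constants delta c -> dpow delta g (c * z) = c * dpow delta g z.
Proof.
move=> c_const; have deltaM i u : delta i (c * u) = c * delta i u.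
  by case: (delta_der i) => _ ->; rewrite c_const mul0r add0r.
rewrite /dpow; elim: (enum 'I_n) => [//|j s IHs] /=.
by rewrite IHs; elim: (_ j) => [//|m IHm] /=; rewrite IHm deltaM.
Qed.

Lemma Nset_sum a (I : eqType) (r : seq I) (F : I -> A) :
  (forall k, k \in r -> Nset delta a (F k)) -> Nset delta a (\sum_(k <- r) F k).
Proof.
move=> NF i; rewrite (morph_add_sum (morph_add_iter (deltaD i) _)).
by rewrite big1_seq // => k /andP [_ /NF].
Qed.

Lemma dpow_Nset_nle a g y : Nset delta a y -> ~~ mle g a -> dpow delta g y = 0.
Proof.
move=> Ny /forallPn [i]; rewrite -ltnNge => lt_ag.
pose h : mindex n := msub g (munit i (a i).+1).
have -> : g = madd h (munit i (a i).+1).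
  apply/ffunP => j; rewrite !ffunE; case: eqP => [->|_]; last by rewrite subn0 addn0.
  by rewrite subnK.
by rewrite dpow_madd dpow_munit Ny (morph_add0 (dpowD h)).
Qed.

Lemma dpow_Nset_mdeg a g y : Nset delta a y -> (mdeg a < mdeg g)%N -> dpow delta g y = 0.
Proof.
move=> Ny lt_ag; apply: dpow_Nset_nle Ny _; apply: contraTN lt_ag => /leq_mdeg.
by rewrite -leqNgt.
Qed.

Lemma NsetB a y z : Nset delta a y -> Nset delta a z -> Nset delta a (y - z).
Proof. by move=> Ny Nz i; rewrite (morph_addB (morph_add_iter (deltaD i) _)) Ny Nz subrr. Qed.

Section Descent.
Variables (d : 'I_n -> option nat) (x : mindex n -> A).
Hypothesis x_descent : descent delta d x.

Lemma dpow_descent_le b g : inI d b -> (mdeg b <= mdeg g)%N ->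
  dpow delta g (x b) = if g == b then 1 else 0.
Proof.
case: x_descent => x0 dx Ib deg_bg; rewrite [dpow delta _ _]dx //.
case: (eqVneq g b) => [->|gb]; first by rewrite mlexx msubxx.
by case: ifP => // /mle_mdeg_eq/(_ deg_bg) eq_gb; rewrite eq_gb eqxx in gb.
Qed.

Variable a : mindex n.
Hypothesis Ia : inI d a.

Definition const_multiple b y := exists c, constants delta c /\ y = c * x b.

Lemma Nset_x b : mle b a -> Nset delta a (x b).
Proof.
move=> ba i; rewrite -dpow_munit; case: x_descent => _ dx.
rewrite [dpow delta _ _]dx ?(inI_mle ba Ia) //; case: ifP => // /mleP/(_ i).
rewrite ffunE eqxx => lt_ab; move/mleP: ba => /(_ i) /(leq_trans lt_ab).
by rewrite ltnn.
Qed.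

Lemma Nset_const_multiple b y : b \in box a -> const_multiple b y -> Nset delta a y.
Proof.
rewrite mem_box => ba [c [c_const ->]] i.
by rewrite -dpow_munit dpow_mulC // dpow_munit Nset_x // mulr0.
Qed.

Lemma Nset_comb (c : mindex n -> A) : (forall b, constants delta (c b)) ->
  Nset delta a (\sum_(b <- box a) c b * x b).
Proof.
move=> c_const; apply: Nset_sum => b bA.
by apply: Nset_const_multiple bA _; exists (c b).
Qed.

Lemma Nset_span_of_vanishing k y : Nset delta a y ->
  (forall g, (k <= mdeg g)%N -> dpow delta g y = 0) ->
  exists2 c, forall b, constants delta (c b) & y = \sum_(b <- box a) c b * x b.
Proof.
elim: k y => [|k IHk] y Ny top_y.
  exists (fun=> 0); first by move=> b; apply: constants0.
  by rewrite big1 => [|b _]; [rewrite -(dpow0 y) top_y | rewrite mul0r].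
(* derivatives of order k are constants, since those of order k + 1 vanish *)
pose c0 b := if mdeg b == k then dpow delta b y else 0.
have c0_const b : constants delta (c0 b).
  move=> i; rewrite /c0; case: eqP => [deg_b|_]; last exact: constants0.
  by rewrite -[delta i _]/(iter 1 _ _) -dpow_munit -dpow_madd top_y // mdegD mdeg_munit deg_b.
pose y' := y - \sum_(b <- box a) c0 b * x b.
have Ny' : Nset delta a y' := NsetB Ny (Nset_comb c0_const).
have top_y' g : (k <= mdeg g)%N -> dpow delta g y' = 0.
  move=> deg_g; rewrite /y' (morph_addB (dpowD g)) (morph_add_sum (dpowD g)).
  rewrite (eq_big_seq (fun b => if b == g then c0 b else 0)); last first.
    move=> b bA; rewrite dpow_mulC // /c0.
    case: eqP => [deg_b|]; last by rewrite mul0r; case: eqP.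
    rewrite dpow_descent_le ?deg_b // ?(inI_mle _ Ia) -?mem_box // eq_sym.
    by case: eqP => [->|]; rewrite ?mulr1 ?mulr0.
  rewrite sum_seq_pred1 ?uniq_box // mem_box /c0.
  case: ifP => [ga|/negbT ga]; last by rewrite subr0 (dpow_Nset_nle Ny).
  case: eqP => [_|/eqP deg_g']; first by rewrite subrr.
  by rewrite subr0 top_y // ltn_neqAle eq_sym deg_g' deg_g.
have [c' c'_const y'E] := IHk y' Ny' top_y'.
exists (fun b => c' b + c0 b).
  by move=> b i; rewrite deltaD c'_const c0_const addr0.
rewrite -[y](subrK (\sum_(b <- box a) c0 b * x b)) -/y' y'E -big_split.
by apply: eq_bigr => b _; rewrite mulrDl.
Qed.

Lemma dpow_const_multiple b g y : b \in box a -> const_multiple b y ->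
  (mdeg b <= mdeg g)%N -> dpow delta g y = if g == b then dpow delta b y else 0.
Proof.
rewrite mem_box => ba [c [c_const ->]] deg_bg.
rewrite !dpow_mulC // !dpow_descent_le ?(inI_mle ba Ia) // eqxx.
by case: eqP; rewrite ?mulr1 ?mulr0.
Qed.

Lemma const_multiple_sum_eq0 (z : mindex n -> A) :
  (forall b, b \in box a -> const_multiple b (z b)) ->
  \sum_(b <- box a) z b = 0 -> forall b, b \in box a -> z b = 0.
Proof.
move=> zM z0; suff vanish m b : b \in box a -> (mdeg a < m + mdeg b)%N -> z b = 0.
  by move=> b bA; apply: (vanish (mdeg a).+1) => //; rewrite ltnS leq_addr.
elim: m b => [|m IHm] b bA lt_ab.
  by move: lt_ab; rewrite mem_box in bA; rewrite add0n ltnNge leq_mdeg.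
(* higher-degree terms vanish by induction, so delta^b isolates the coefficient of x^[b] *)
have coef_b : dpow delta b (\sum_(b' <- box a) z b') = dpow delta b (z b).
  rewrite (morph_add_sum (dpowD b)).
  rewrite (eq_big_seq (fun b' => if b' == b then dpow delta b' (z b') else 0)).
    by rewrite sum_seq_pred1 ?uniq_box // bA.
  move=> b' b'A; case: (ltnP (mdeg b) (mdeg b')) => [lt_bb'|le_b'b].
    rewrite IHm // ?(morph_add0 (dpowD b)); last first.
      by rewrite (leq_trans lt_ab) // addSnnS leq_add2l.
    by case: eqP => // eq_b'b; rewrite eq_b'b ltnn in lt_bb'.
  by rewrite (dpow_const_multiple b'A (zM b' b'A) le_b'b) eq_sym.
have [c [c_const zbE]] := zM b bA.
rewrite zbE dpow_mulC // dpow_descent_le ?(inI_mle _ Ia) -?mem_box // eqxx mulr1 in coef_b.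
by rewrite zbE -coef_b z0 (morph_add0 (dpowD b)) mul0r.
Qed.

Lemma Nset_dsum_const_multiple : is_dsum (Nset delta a) (box a) const_multiple.
Proof.
split; last exact: const_multiple_sum_eq0.
move=> y; split=> [Ny|[z [zM ->]]].
  have [c c_const ->] := Nset_span_of_vanishing Ny (fun g => dpow_Nset_mdeg (g := g) Ny).
  by exists (fun b => c b * x b); split=> // b _; exists (c b).
exact: Nset_sum (fun b bA => Nset_const_multiple bA (zM b bA)).
Qed.

End Descent.
End CommutingDerivations.

Theorem lemma2p1 (A : pzRingType) (n : nat) (delta : 'I_n -> A -> A)
  (d : 'I_n -> option nat) (x : mindex n -> A) :
  (forall i, is_derivation (delta i)) ->
  (forall i j y, delta i (delta j y) = delta j (delta i y)) ->
  descent delta d x ->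
  forall a : mindex n, inI d a ->
    is_dsum (Nset delta a) (box a)
      (fun b y => exists c, constants delta c /\ y = c * x b) /\
    is_dsum (Nset delta a) (box a)
      (fun b y => exists c, constants delta c /\ y = x b * c).
Proof.
move=> delta_der delta_comm x_descent a Ia; split.
  exact (Nset_dsum_const_multiple delta_der delta_comm x_descent Ia).
(* a derivation of A is also one of the converse ring, where c * x b reads x b * c *)
have delta_der_c i : is_derivation (delta i : A^c -> A^c).
  by case: (delta_der i) => deltaD deltaM; split=> // u v; rewrite /= deltaM addrC.
exact: (@Nset_dsum_const_multiple A^c _ _ delta_der_c delta_comm _ _ x_descent _ Ia).
Qed.
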